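(* Let $q$ be an odd prime power and let $\mathcal{O}$ be an oval in $PG(2,q)$; let $n=q+1$. Then $\mathcal{O}$ is a $(1,\mu)$-saturating $n$-set with $\mu=\frac{1}{2}(q-1)$. A linear code $C$ over $\mathbb{F}_q$ corresponding to $\mathcal{O}$ is an $[n,n-3,4]_q$ code with covering radius $2$, and it is a $(2,\mu)$-MCF code with $\mu$-density $\gamma_\mu(C,2)=1+\frac{1}{q}$.
   Context: $PG(2,q)$ is the projective plane over $\mathbb{F}_q$. An oval is a set of $q+1$ points of $PG(2,q)$ no three of which are collinear. For a point set $S$, a secant of $S$ is a line $\ell$ with $|\ell\cap S|\ge2$, counted with multiplicity $\binom{|\ell\cap S|}{2}$. A set $S$ of $n$ points of $PG(N,q)$ is a $(1,\mu)$-saturating $n$-set if (M1) $S$ spans $PG(N,q)$, (M2) $S\neq PG(N,q)$, and (M3) every point $Q\notin S$ lies on secants of $S$ whose multiplicities sum to at least $\mu$. A linear code of length $n$ over $\mathbb{F}_q$ corresponds to $S=\{P_1,\dots,P_n\}\subset PG(N,q)$ if it has a parity-check matrix whose $i$-th column is a homogeneous coordinate vector of $P_i$. An $[n,k,d]_q$ code is a linear code of length $n$, dimension $k$ and minimum distance $d$; its covering radius $R$ is $\max_{x\in\mathbb{F}_q^n} d(x,C)$ (Hamming distance). A code $C$ with covering radius $R$ is an $(R,\mu)$-MCF code if every $x\in\mathbb{F}_q^n$ with $d(x,C)=R$ is at distance exactly $R$ from at least $\mu$ codewords. Its $\mu$-density is $\gamma_\mu(C,R)=\frac{\sum_{x:\,d(x,C)=R}\#\{c\in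 C: d(x,c)=R\}}{\mu\cdot\#\{x\in\mathbb{F}_q^n: d(x,C)=R\}}$. *)

From HB Require Import structures.
From mathcomp Require Import all_boot all_order all_algebra.
Set Implicit Arguments. Unset Strict Implicit. Unset Printing Implicit Defensive.
Import Order.TTheory GRing.Theory Num.Theory.
Local Open Scope ring_scope.

Section Proj.
Variable F : finFieldType.

Definition normalized (N : nat) (v : 'rV[F]_N.+1) : bool :=
  [exists i : 'I_N.+1,
     (v 0 i == 1) && [forall j : 'I_N.+1, (j < i)%N ==> (v 0 j == 0)]].

(* Points of PG(N,q): one normalized representative per 1-dim subspace. *)
Definition point (N : nat) := {v : 'rV[F]_N.+1 | normalized v}.

Definition line_through (N : nat) (P1 P2 : point N) : {set point N} :=
  [set R : point N | (val R <= col_mx (val P1) (val P2))%MS].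

Definition lines (N : nat) : {set {set point N}} :=
  [set l : {set point N} | [exists P1 : point N, exists P2 : point N,
     (P1 != P2) && (l == line_through P1 P2)]].

Definition collinear (N : nat) (P1 P2 P3 : point N) : Prop :=
  exists2 l, l \in lines N & [/\ P1 \in l, P2 \in l & P3 \in l].

Definition is_oval (O : {set point 2}) : Prop :=
  #|O| = #|F|.+1 /\
  forall P1 P2 P3, P1 \in O -> P2 \in O -> P3 \in O ->
    P1 != P2 -> P1 != P3 -> P2 != P3 -> ~ collinear P1 P2 P3.

Definition secant_mult (N : nat) (S : {set point N}) (Q : point N) : nat :=
  \sum_(l in lines N | Q \in l) 'C(#|l :&: S|, 2).

Definition saturating_1mu (N : nat) (S : {set point N}) (n mu : nat) : Prop :=
  [/\ #|S| = n,
      \rank (\sum_(P in S) <<val P>>)%MS = N.+1,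
      S != setT &
      forall Q : point N, Q \notin S -> (mu <= secant_mult S Q)%N].

Variable n : nat.

Definition wt (x : 'rV[F]_n) : nat := #|[set i : 'I_n | x 0 i != 0]|.
Definition hdist (x y : 'rV[F]_n) : nat := wt (x - y).
Definition codewords (C : 'M[F]_n) : {set 'rV[F]_n} :=
  [set c : 'rV[F]_n | (c <= C)%MS].

Definition code_dim (C : 'M[F]_n) : nat := \rank C.
Definition min_dist (C : 'M[F]_n) : nat :=
  \big[minn/n]_(c in codewords C | c != 0) wt c.
Definition distC (C : 'M[F]_n) (x : 'rV[F]_n) : nat :=
  \big[minn/n]_(c in codewords C) hdist x c.
Definition covrad (C : 'M[F]_n) : nat := \max_(x : 'rV[F]_n) distC C x.

Definition nb_at (C : 'M[F]_n) (R : nat) (x : 'rV[F]_n) : nat :=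
  #|[set c in codewords C | hdist x c == R]|.

Definition MCF (C : 'M[F]_n) (R mu : nat) : Prop :=
  covrad C = R /\
  forall x : 'rV[F]_n, distC C x = R -> (mu <= nb_at C R x)%N.

Definition density (C : 'M[F]_n) (R mu : nat) : rat :=
  ((\sum_(x : 'rV[F]_n | distC C x == R) nb_at C R x)%:R /
   (mu%:R * #|[set x : 'rV[F]_n | distC C x == R]|%:R))%R.

End Proj.

(* C corresponds to S = {P_1,...,P_n}: C has a parity-check matrix H whose
   i-th column is a homogeneous coordinate vector of P_i, where i |-> P_i
   enumerates S bijectively. *)
Definition corresponds (F : finFieldType) (N n : nat) (C : 'M[F]_n)
    (S : {set point F N}) : Prop :=
  exists (H : 'M[F]_(N.+1, n)) (P : 'I_n -> point F N),
    [/\ injective P, S = [set P i | i : 'I_n],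
        (forall i : 'I_n, exists2 c : F, c != 0 & col i H = c *: (val (P i))^T)
      & (C == kermx H^T)%MS].

From HB Require Import structures.
From mathcomp Require Import all_boot all_order all_algebra.
From mathcomp Require Import zify ring.
Set Implicit Arguments. Unset Strict Implicit. Unset Printing Implicit Defensive.
Import Order.TTheory GRing.Theory Num.Theory.

(* A point [Q] off the oval sees the [q + 1] oval points in pairs along secants and singly
   along tangents, so [2 * secant_mult O Q + #tangents through Q = q + 1].  For odd [q]
   the tangents through [Q] are even in number, and at most two: the points [R] of the
   tangent at an oval point [P1] each lie on a second tangent, which yields a bijection
   from that tangent minus [P1] onto the other oval points.  Hence [secant_mult O Q >=
   (q - 1) / 2].
   For the code, the syndrome of an error is a multiple of a point of PG(2,q).  Three
   oval points are independent, so the minimum distance is 4 and radius-1 balls around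
   codewords are disjoint.  A syndrome on the oval is corrected by weight 1; a syndrome
   off the oval is corrected by weight 2 along each of its [>= (q - 1) / 2] secants.
   Counting the disjoint balls gives the number of vectors at distance 2, hence the
   density. *)

Section RowSpaces.
Variable F : fieldType.
Local Open Scope ring_scope.

Lemma mxrank_adds_rV n m (A : 'M[F]_(m, n)) (v : 'rV[F]_n) :
  ~~ (v <= A)%MS -> \rank (A + v)%MS = (\rank A).+1.
Proof.
move=> vA; have v0 : v != 0 by apply: contraNneq vA => ->; rewrite sub0mx.
rewrite mxrank_disjoint_sum ?rank_rV ?v0 ?addn1 //; apply/eqP; rewrite -mxrank_eq0.
apply: contraNT vA => r0; have sv : (v <= A :&: v)%MS.
  rewrite -(mxrank_leqif_sup (capmxSr A v)) eqn_leq mxrankS ?capmxSr //= rank_rV v0.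
  by rewrite lt0n.
exact: submx_trans sv (capmxSl _ _).
Qed.

Lemma exists_rV_mul0 m n (M : 'M[F]_(m, n)) :
  (n < m)%N -> exists2 u : 'rV[F]_m, u != 0 & u *m M = 0.
Proof.
move=> nm; have K0 : kermx M != 0.
  by rewrite kermx_eq0 -row_leq_rank -ltnNge (leq_ltn_trans (rank_leq_col M)).
have [r Kr] : exists r, row r (kermx M) != 0.
  apply/existsP; apply: contraR K0 => /existsPn K0.
  by apply/eqP/row_matrixP => r; rewrite row0; apply/eqP/negPn/K0.
by exists (row r (kermx M)) => //; apply/sub_kermxP; apply: row_sub.
Qed.

End RowSpaces.

Section ProjectivePoints.
Variable F : finFieldType.
Local Open Scope ring_scope.
Local Notation q := #|F|.

Definition pvec N (P : point F N) : 'rV[F]_N.+1 := val P.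

Lemma pvec_neq0 N (P : point F N) : pvec P != 0.
Proof.
case: P => v nv; rewrite /pvec /=; case/existsP: nv => i /andP [/eqP vi _].
by apply/eqP => v0; move: vi; rewrite v0 mxE => /esym/eqP; rewrite oner_eq0.
Qed.

Lemma scale_pvec_inj N (P R : point F N) (a : F) : pvec P = a *: pvec R -> P = R.
Proof.
case: P R => [v nv] [w nw] /= E; apply: val_inj => /=; rewrite /pvec /= in E.
move: nv nw => /existsP [i /andP [/eqP vi /forallP vlt]].
move=> /existsP [k /andP [/eqP wk /forallP wlt]].
have vE j : v 0 j = a * w 0 j by rewrite E mxE.
case: (ltngtP i k) => [ik|ki|/val_inj ik].
- have /eqP wi0 := implyP (wlt i) ik.
  by move: vi; rewrite vE wi0 mulr0 => /esym/eqP; rewrite oner_eq0.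
- have /eqP := implyP (vlt k) ki; rewrite vE wk mulr1 => a0.
  by move: vi; rewrite vE a0 mul0r => /esym/eqP; rewrite oner_eq0.
- have a1 : a = 1 by move: vi; rewrite vE ik wk mulr1.
  by rewrite E a1 scale1r.
Qed.

Lemma submx_pvec_inj N (P R : point F N) : (pvec P <= pvec R)%MS -> P = R.
Proof.
case/submxP => D E; apply: (@scale_pvec_inj _ _ _ (D 0 0)).
by rewrite E {1}(mx11_scalar D) mul_scalar_mx.
Qed.

Lemma row_scale_pvec N (v : 'rV[F]_N.+1) : v != 0 ->
  exists P : point F N, exists2 a : F, a != 0 & v = a *: pvec P.
Proof.
move=> v0; have ex : exists k, (k < N.+1)%N && (v 0 (inord k) != 0).
  have /forallPn [i vi] : ~~ [forall i, v 0 i == 0].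
    by apply: contra v0 => /forallP v0; apply/eqP/rowP => i; rewrite mxE; apply/eqP.
  by exists i; rewrite ltn_ord inord_val.
case: (ex_minnP ex) => m /andP [mN vm] mmin; set a := v 0 (inord m) in vm.
have nv : normalized (a^-1 *: v).
  apply/existsP; exists (inord m); rewrite mxE mulVf // eqxx /=.
  apply/forallP => j; apply/implyP => jm; rewrite mxE.
  have [->|vj] := eqVneq (v 0 j) 0; first by rewrite mulr0.
  have := mmin j; rewrite ltn_ord inord_val vj => /(_ isT).
  by rewrite leqNgt -[m](@inordK N) // jm.
exists (exist (fun w => normalized w) _ nv), a => //.
by rewrite /pvec /= scalerA mulfV // scale1r.
Qed.

Definition line_mx N (P R : point F N) := col_mx (pvec P) (pvec R).

Lemma line_mx_subl N (P R : point F N) : (pvec P <= line_mx P R)%MS.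
Proof. by have := submx_refl (line_mx P R); rewrite col_mx_sub => /andP []. Qed.

Lemma line_mx_subr N (P R : point F N) : (pvec R <= line_mx P R)%MS.
Proof. by have := submx_refl (line_mx P R); rewrite col_mx_sub => /andP []. Qed.

Lemma line_mxC N (P R : point F N) : (line_mx P R :=: line_mx R P)%MS.
Proof. by apply/eqmxP; rewrite !col_mx_sub !line_mx_subl !line_mx_subr. Qed.

Lemma mxrank_line_mx N (P R : point F N) : P != R -> \rank (line_mx P R) = 2%N.
Proof.
move=> PR; rewrite -addsmxE mxrank_adds_rV ?rank_rV ?pvec_neq0 //.
by apply: contra PR => /submx_pvec_inj ->.
Qed.

Lemma line_mx_eqmx N (P R A B : point F N) : P != R -> A != B ->
  (pvec A <= line_mx P R)%MS -> (pvec B <= line_mx P R)%MS ->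
  (line_mx A B :=: line_mx P R)%MS.
Proof.
move=> PR AB sA sB; apply/eqmxP; have sub : (line_mx A B <= line_mx P R)%MS.
  by rewrite col_mx_sub sA sB.
by have [_] := mxrank_leqif_eq sub; rewrite !mxrank_line_mx // eqxx sub => ->.
Qed.

Definition line_coordl N (X P R : point F N) : F :=
  lsubmx (pvec X *m pinvmx (line_mx P R)) 0 0.
Definition line_coordr N (X P R : point F N) : F :=
  rsubmx (pvec X *m pinvmx (line_mx P R)) 0 0.

Lemma line_coordE N (X P R : point F N) : (pvec X <= line_mx P R)%MS ->
  pvec X = line_coordl X P R *: pvec P + line_coordr X P R *: pvec R.
Proof.
move/mulmxKpV => E; rewrite -{1}E -[pvec X *m _]hsubmxK mul_row_col.
by rewrite (mx11_scalar (lsubmx _)) (mx11_scalar (rsubmx _)) !mul_scalar_mx.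
Qed.

Lemma line_coord_neq0 N (X P R : point F N) : (pvec X <= line_mx P R)%MS -> X != P -> X != R ->
  (line_coordl X P R != 0) && (line_coordr X P R != 0).
Proof.
move=> s XP XR; have E := line_coordE s; apply/andP; split; apply/negP => /eqP k0.
  by move: E; rewrite k0 scale0r add0r => /scale_pvec_inj XE; rewrite XE eqxx in XR.
by move: E; rewrite k0 scale0r addr0 => /scale_pvec_inj XE; rewrite XE eqxx in XP.
Qed.

Lemma mem_line_through N (P R X : point F N) :
  (X \in line_through P R) = (pvec X <= line_mx P R)%MS.
Proof. by rewrite inE. Qed.

Lemma line_through_in_lines N (P R : point F N) : P != R -> line_through P R \in lines F N.
Proof.
by move=> PR; rewrite inE; apply/existsP; exists P; apply/existsP; exists R; rewrite PR /=.
Qed.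

Lemma line_through_uniq N (l : {set point F N}) A B : l \in lines F N ->
  A \in l -> B \in l -> A != B -> l = line_through A B.
Proof.
rewrite inE => /existsP [P /existsP [R /andP [PR /eqP ->]]].
rewrite !mem_line_through => sA sB AB; apply/setP => X.
by rewrite !mem_line_through (line_mx_eqmx PR AB sA sB).
Qed.

Lemma card_rV_submx m n (A : 'M[F]_(m, n)) :
  #|[set v : 'rV[F]_n | (v <= A)%MS]| = (q ^ \rank A)%N.
Proof.
rewrite -[\rank A]mul1n -card_mx.
have inj_base : injective (mulmxr (row_base A)).
  have /row_freeP [A' A'K] := row_base_free A.
  by move=> ?; apply: can_inj (mulmxr A') _ => u; rewrite /= -mulmxA A'K mulmx1.
rewrite -(card_image (inj_base _)); apply: eq_card => v.
by rewrite inE -(eq_row_base A) (sameP submxP codomP).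
Qed.

(* Each point of the row space of [W] accounts for its [q - 1] nonzero multiples. *)
Lemma card_points_submx N m (W : 'M[F]_(m, N.+1)) :
  (#|[set P : point F N | (pvec P <= W)%MS]| * q.-1)%N = (q ^ \rank W).-1.
Proof.
set S := [set P : point F N | _]; set U := [set a : F | a != 0].
have -> : q.-1 = #|U| by rewrite -(cardsC1 (0 : F)); apply: eq_card => a; rewrite !inE.
rewrite -cardsX; pose f (x : point F N * F) := x.2 *: pvec x.1.
have f_inj : {in setX S U &, injective f}.
  move=> [P a] [R b]; rewrite !inE /f /= => /andP [_ a0] /andP [_ b0] E.
  have PR : P = R.
    by apply: (@scale_pvec_inj _ _ _ (a^-1 * b)); rewrite -scalerA -E scalerA mulVf // scale1r.
  subst R; congr (_, _); apply/eqP; rewrite -subr_eq0.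
  have /eqP : (a - b) *: pvec P = 0 by rewrite scalerBl E subrr.
  by rewrite scaler_eq0 (negbTE (pvec_neq0 P)) orbF.
rewrite -(card_in_imset f_inj) -(card_rV_submx W) [in RHS](cardsD1 0) inE sub0mx add1n /=.
apply: eq_card => v; rewrite !inE; apply/imsetP/andP.
- move=> [[P a]]; rewrite !inE /f /= => /andP [sP a0] ->.
  by rewrite scaler_eq0 negb_or a0 pvec_neq0 scalemx_sub.
- move=> [v0 sv]; have [P [a a0 vE]] := row_scale_pvec v0.
  exists (P, a); last by rewrite /f vE.
  rewrite !inE a0 andbT.
  have -> : pvec P = a^-1 *: v by rewrite vE scalerA mulVf // scale1r.
  exact: scalemx_sub.
Qed.

Lemma q_gt1 : (1 < q)%N.
Proof. exact: card_finNzRing_gt1. Qed.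

Lemma q_ge3 : odd q -> (3 <= q)%N.
Proof. by have := q_gt1; case: q => [|[|[|]]]. Qed.

Lemma card_plane : #|[set: point F 2]| = (q ^ 2 + q + 1)%N.
Proof.
have := card_points_submx (1%:M : 'M[F]_3); rewrite mxrank1.
have -> : [set P : point F 2 | (pvec P <= 1%:M)%MS] = setT.
  by apply/setP => P; rewrite !inE submx1.
have := q_gt1; move: (q) #|_| => [|k] c // k0.
rewrite !expnS expn0 /= => E; nia.
Qed.

Lemma card_line_mx (P R : point F 2) : P != R ->
  #|[set X : point F 2 | (pvec X <= line_mx P R)%MS]| = q.+1.
Proof.
move=> PR; have := card_points_submx (line_mx P R); rewrite mxrank_line_mx //.
have := q_gt1; move: (q) #|_| => [|k] c // k0.
rewrite !expnS expn0 /= => E; nia.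
Qed.

Lemma card_line_mxD1 (P R : point F 2) : P != R ->
  #|[set X : point F 2 | (pvec X <= line_mx P R)%MS & X != P]| = q.
Proof.
move=> PR; have := card_line_mx PR.
rewrite (cardsD1 P) inE line_mx_subl [(_ + #|_|)%N]add1n => -[<-].
by apply: eq_card => X; rewrite !inE andbC.
Qed.

End ProjectivePoints.


Lemma card_set_sum (T : finType) (p : pred T) : #|[set x | p x]| = (\sum_x p x)%N.
Proof. by rewrite -sum1_card big_mkcond; apply: eq_bigr => x _; rewrite inE; case: (p x). Qed.

Section Oval.
Variables (F : finFieldType) (O : {set point F 2}).
Hypothesis ovalO : is_oval O.
Local Open Scope ring_scope.
Local Notation q := #|F|.

Lemma card_oval : #|O| = q.+1.
Proof. by case: ovalO. Qed.

Lemma card_ovalD1 P : P \in O -> #|O :\ P| = q.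
Proof.
by move=> PO; have := card_oval; rewrite (cardsD1 P) PO [(_ + #|_|)%N]add1n => -[].
Qed.

Lemma oval_notin_line_mx (P P' R : point F 2) : P \in O -> P' \in O -> R \in O ->
  P != P' -> P != R -> P' != R -> ~~ (pvec R <= line_mx P P')%MS.
Proof.
move=> PO P'O RO PP' PR P'R; apply/negP => sR.
apply: (ovalO.2 P P' R PO P'O RO PP' PR P'R).
exists (line_through P P'); first exact: line_through_in_lines.
by rewrite !mem_line_through line_mx_subl line_mx_subr sR.
Qed.

(* For [P] on the oval: [R] is a point other than [P] of the tangent at [P]. *)
Definition on_tangent (P R : point F 2) : bool :=
  (R != P) && [forall P' in O, (P' != P) ==> ~~ (pvec R <= line_mx P P')%MS].

Lemma on_tangent_notin P R : on_tangent P R -> R \notin O.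
Proof.
case/andP => RP /forall_inP tR; apply/negP => RO.
by have := tR R RO; rewrite RP line_mx_subr.
Qed.

Lemma on_tangent_neq P R : on_tangent P R -> P != R.
Proof. by case/andP; rewrite eq_sym. Qed.

Lemma on_tangent_line_mx P R0 R : on_tangent P R0 ->
  (pvec R <= line_mx P R0)%MS -> R != P -> on_tangent P R.
Proof.
move=> tR0 sR RP; rewrite /on_tangent RP; apply/forall_inP => P' P'O.
apply/implyP => P'P; apply/negP => sR'.
have PR0 := on_tangent_neq tR0.
have E1 : (line_mx P R :=: line_mx P P')%MS.
  by apply: line_mx_eqmx; rewrite ?line_mx_subl // eq_sym.
have E2 : (line_mx P R :=: line_mx P R0)%MS.
  by apply: line_mx_eqmx; rewrite ?line_mx_subl // eq_sym.
case/andP: tR0 => _ /forall_inP /(_ P' P'O); rewrite P'P /=.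
by rewrite -E1 E2 line_mx_subr.
Qed.

Lemma count_secants_through P R : P \in O -> R != P ->
  (\sum_(P' in O :\ P) (pvec R <= line_mx P P')%MS = ~~ on_tangent P R)%N.
Proof.
move=> PO RP; rewrite /on_tangent RP /=.
case: forall_inP => [tR | /forall_inP /forall_inPn [P0 P0O]].
  apply: big1 => P'; rewrite !inE => /andP [P'P P'O].
  by rewrite (negbTE (implyP (tR P' P'O) P'P)).
rewrite negb_imply negbK => /andP [P0P sR].
rewrite (bigD1 P0) ?inE ?P0O ?P0P //= sR big1 // => P'.
rewrite !inE => /andP [/andP [P'P P'O] P'P0].
apply/eqP; rewrite eqb0; apply/negP => sR'.
have E0 : (line_mx P R :=: line_mx P P0)%MS.
  by apply: line_mx_eqmx; rewrite ?line_mx_subl // eq_sym.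
have E' : (line_mx P R :=: line_mx P P')%MS.
  by apply: line_mx_eqmx; rewrite ?line_mx_subl // eq_sym.
have := oval_notin_line_mx PO P0O P'O; rewrite eq_sym P0P eq_sym P'P eq_sym P'P0.
by rewrite -E0 E' line_mx_subr => /(_ isT isT isT).
Qed.

(* The [q^2 + q] points other than [P] are covered by the [q] secants through [P],
   [q] points each, and by the tangent. *)
Lemma card_on_tangent P : P \in O -> #|[set R | on_tangent P R]| = q.
Proof.
move=> PO; set T := [set R | on_tangent P R].
have E : (#|T| + \sum_(P' in O :\ P) #|[set R | (pvec R <= line_mx P P')%MS & R != P]|
    = #|[set~ P]|)%N.
  under eq_bigr do rewrite card_set_sum.
  rewrite !card_set_sum exchange_big -big_split /=; apply: eq_bigr => R _.
  rewrite !inE; have [->|RP] := eqVneq R P.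
    by rewrite /on_tangent eqxx big1 // => P' _; rewrite andbF.
  under eq_bigr do rewrite andbT.
  by rewrite count_secants_through //; case: (on_tangent P R).
have secant_card P' : P' \in O :\ P ->
    #|[set R | (pvec R <= line_mx P P')%MS & R != P]| = q.
  by rewrite !inE => /andP [P'P _]; rewrite card_line_mxD1 // eq_sym.
move: E; rewrite (eq_bigr _ secant_card) sum_nat_const card_ovalD1 // cardsC1 -cardsT card_plane.
lia.
Qed.

Lemma on_tangent_sub_line_mx P R0 R : P \in O ->
  on_tangent P R0 -> on_tangent P R -> (pvec R <= line_mx P R0)%MS.
Proof.
move=> PO tR0 tR; set S := [set X | (pvec X <= line_mx P R0)%MS & X != P].
have ST : S \subset [set X | on_tangent P X].
  by apply/subsetP => X; rewrite !inE => /andP [sX XP]; apply: on_tangent_line_mx tR0 sX XP.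
have /eqP SE : S == [set X | on_tangent P X].
  by rewrite eqEcard ST card_on_tangent // card_line_mxD1 ?leqnn ?(on_tangent_neq tR0).
have : R \in S by rewrite SE inE.
by rewrite inE => /andP [].
Qed.

Lemma on_tangent_inj P P' R R' : P \in O -> P' \in O -> P != P' ->
  on_tangent P R -> on_tangent P R' -> on_tangent P' R -> on_tangent P' R' -> R = R'.
Proof.
move=> PO P'O PP' tR tR' t'R t'R'; apply/eqP; apply: contraT => RR'.
have E := line_mx_eqmx (on_tangent_neq t'R) RR' (line_mx_subr _ _)
  (on_tangent_sub_line_mx P'O t'R t'R').
have E' := line_mx_eqmx (on_tangent_neq tR) RR' (line_mx_subr _ _)
  (on_tangent_sub_line_mx PO tR tR').
have sP' : (pvec P' <= line_mx P R)%MS by rewrite -E' E line_mx_subl.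
have ER := line_mx_eqmx (on_tangent_neq tR) PP' (line_mx_subl _ _) sP'.
case/andP: tR => _ /forall_inP /(_ P' P'O); rewrite eq_sym PP' /=.
by rewrite ER line_mx_subr.
Qed.

End Oval.


Lemma bin2_muln2 k : ('C(k, 2) * 2 = k * k.-1)%N.
Proof. by have := bin_ffact k 2; rewrite ffactnS ffactn1. Qed.

Lemma sum_pairsD1 (T : finType) (A : {set T}) :
  (\sum_(x in A) \sum_(y in A :\ x) 1 = #|A| * #|A|.-1)%N.
Proof.
rewrite -sum_nat_const; apply: eq_bigr => x xA.
by rewrite sum1_card (cardsD1 x A) xA.
Qed.

Section Secants.
Variables (F : finFieldType) (O : {set point F 2}).
Hypothesis ovalO : is_oval O.
Local Open Scope ring_scope.
Local Notation q := #|F|.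

Lemma count_lines_through_pair (Q P P' : point F 2) : P != P' ->
  (\sum_(l in lines F 2 | Q \in l) ((P \in l) && (P' \in l)) =
   (pvec Q <= line_mx P P')%MS)%N.
Proof.
move=> PP'; have [sQ|nsQ] := boolP (pvec Q <= line_mx P P')%MS.
  rewrite (bigD1 (line_through P P')) /=; last by rewrite line_through_in_lines // mem_line_through.
  rewrite !mem_line_through line_mx_subl line_mx_subr big1 // => l /andP [/andP [lL Ql] lPP'].
  apply/eqP; rewrite eqb0; apply: contra lPP' => /andP [Pl P'l].
  by rewrite (line_through_uniq lL Pl P'l PP').
apply: big1 => l /andP [lL Ql]; apply/eqP; rewrite eqb0; apply/negP => /andP [Pl P'l].
by move: Ql; rewrite (line_through_uniq lL Pl P'l PP') mem_line_through (negbTE nsQ).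
Qed.

Definition secant_pairs (Q : point F 2) : nat :=
  \sum_(P in O) \sum_(P' in O :\ P) (pvec Q <= line_mx P P')%MS.

Lemma secant_mult_double Q : (secant_mult O Q * 2 = secant_pairs Q)%N.
Proof.
rewrite /secant_mult big_distrl /=.
have pairs_on l : ('C(#|l :&: O|, 2) * 2 =
    \sum_(P in O) \sum_(P' in O :\ P) ((P \in l) && (P' \in l)))%N.
  rewrite bin2_muln2 -sum_pairsD1 big_mkcond [RHS]big_mkcond /=; apply: eq_bigr => P _.
  rewrite inE; case: (P \in l); case: (P \in O) => //=; last by rewrite big1.
  rewrite big_mkcond [RHS]big_mkcond /=; apply: eq_bigr => P' _.
  by rewrite !inE; case: (P' \in l); case: (P' \in O); case: (P' != P).
under eq_bigr do rewrite pairs_on.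
rewrite exchange_big; apply: eq_bigr => P PO.
rewrite exchange_big; apply: eq_bigr => P'; rewrite !inE => /andP [P'P _].
by rewrite count_lines_through_pair // eq_sym.
Qed.

Definition tangents_through (Q : point F 2) := [set P in O | on_tangent O P Q].

(* Through each oval point [P] passes either a secant or the tangent containing [Q]. *)
Lemma secant_pairs_tangents Q : Q \notin O ->
  (secant_pairs Q + #|tangents_through Q| = q.+1)%N.
Proof.
move=> QO; rewrite -(card_oval ovalO) -!sum1_card /secant_pairs.
rewrite [X in (_ + X)%N]big_mkcond /= [in LHS]big_mkcond [RHS]big_mkcond /= -big_split.
apply: eq_bigr => P _; rewrite inE; case: ifP => //= PO.
have QP : Q != P by apply: contraNneq QO => ->.
by rewrite count_secants_through //; case: (on_tangent O P Q).
Qed.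

Lemma tangents_through_even Q : odd q -> Q \notin O -> ~~ odd #|tangents_through Q|.
Proof.
move=> oq QO; have := congr1 odd (secant_pairs_tangents QO).
by rewrite -secant_mult_double oddD oddM andbF /= oq => ->.
Qed.

Hypothesis odd_q : odd q.

Section TangentPartner.
Variable P1 : point F 2.
Hypothesis P1O : P1 \in O.

(* By parity every point [R] of the tangent at [P1] lies on a second tangent, so the
   default value [P1] is never used. *)
Definition partner (R : point F 2) : point F 2 :=
  odflt P1 [pick P in tangents_through R :\ P1].

Lemma partnerP R : on_tangent O P1 R ->
  [/\ partner R \in O, partner R != P1 & on_tangent O (partner R) R].
Proof.
move=> tR; have RO := on_tangent_notin tR.
have : (0 < #|tangents_through R :\ P1|)%N.
  have := tangents_through_even odd_q RO.
  have P1R : P1 \in tangents_through R by rewrite inE P1O tR.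
  by rewrite (cardsD1 P1) P1R /=; case: #|_| => [|[]].
case/card_gt0P => P PR; rewrite /partner; case: pickP => [P' | /(_ P)]; last by rewrite PR.
by rewrite !inE => /and3P [-> -> ->].
Qed.

Lemma partner_inj : {in [set R | on_tangent O P1 R] &, injective partner}.
Proof.
move=> R R'; rewrite !inE => tR tR' E.
have [PO PP1 tPR] := partnerP tR; have [_ _] := partnerP tR'; rewrite -E => tPR'.
exact: on_tangent_inj PO P1O PP1 tPR tPR' tR tR'.
Qed.

Lemma partner_onto P : P \in O -> P != P1 ->
  exists2 R, on_tangent O P1 R & partner R = P.
Proof.
move=> PO PP1; set T := [set R | on_tangent O P1 R].
have sub : partner @: T \subset O :\ P1.
  apply/subsetP => X /imsetP [R]; rewrite inE => tR ->.
  by have [? ? _] := partnerP tR; rewrite !inE andbC; apply/andP.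
have /eqP E : partner @: T == O :\ P1.
  have cT : #|T| = q by apply: card_on_tangent.
  by rewrite eqEcard sub (card_in_imset partner_inj) cT card_ovalD1 ?leqnn.
have : P \in partner @: T by rewrite E !inE PP1.
by case/imsetP => R; rewrite inE => tR ->; exists R.
Qed.

End TangentPartner.

Lemma tangents_through_le2 Q : Q \notin O -> (#|tangents_through Q| <= 2)%N.
Proof.
move=> QO; have [->|[P1 P1Q]] := set_0Vmem (tangents_through Q); first by rewrite cards0.
have /andP [P1O tQ] : (P1 \in O) && on_tangent O P1 Q by rewrite inE in P1Q.
suff : tangents_through Q :\ P1 \subset [set partner P1 Q].
  by move/subset_leq_card; rewrite cards1 (cardsD1 P1 (tangents_through Q)) P1Q add1n ltnS.
apply/subsetP => P; rewrite !inE => /and3P [PP1 PO tPQ].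
have [R tR ?] := partner_onto P1O PO PP1; subst P.
have [PRO PRP1 tPR] := partnerP P1O tR.
by rewrite (on_tangent_inj ovalO PRO P1O PRP1 tPR tPQ tR tQ).
Qed.

Lemma secant_mult_ge Q : Q \notin O -> ((q.-1)./2 <= secant_mult O Q)%N.
Proof.
move=> QO; have := secant_pairs_tangents QO; rewrite -secant_mult_double.
have := tangents_through_le2 QO; have := odd_double_half q; rewrite odd_q; lia.
Qed.

End Secants.


Lemma bigmin_leq (I : finType) (P : pred I) (f : I -> nat) m i :
  P i -> (\big[minn/m]_(j | P j) f j <= f i)%N.
Proof.
move=> Pi; have : i \in index_enum I by rewrite mem_index_enum.
elim: (index_enum I) => [|j r IH] //; rewrite inE big_cons => /orP [/eqP <-|ir].
  by rewrite Pi geq_minl.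
by case: (P j); rewrite ?geq_min IH ?orbT.
Qed.

Lemma leq_bigmin (I : finType) (P : pred I) (f : I -> nat) m k :
  (k <= m)%N -> (forall i, P i -> k <= f i)%N -> (k <= \big[minn/m]_(j | P j) f j)%N.
Proof.
move=> km kf; apply: (big_ind (fun v => k <= v)%N) => // x y kx ky.
by rewrite leq_min kx ky.
Qed.

Lemma bigmin_attained (I : finType) (P : pred I) (f : I -> nat) m i0 :
  P i0 -> (forall i, P i -> f i <= m)%N -> exists2 i, P i & \big[minn/m]_(j | P j) f j = f i.
Proof.
move=> Pi0 fm; case: (arg_minnP f Pi0) => i Pi imin; exists i => //.
by apply/eqP; rewrite eqn_leq bigmin_leq //= leq_bigmin ?fm.
Qed.

Lemma set2_ltn_inj n (i j k l : 'I_n) : (i < j)%N -> (k < l)%N ->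
  [set i; j] = [set k; l] -> (i, j) = (k, l).
Proof.
move=> ij kl E; have : i \in [set k; l] by rewrite -E set21.
have : j \in [set k; l] by rewrite -E set22.
rewrite !inE => /orP [] /eqP jE /orP [] /eqP iE; subst => //.
- by rewrite ltnn in ij.
- by have := ltn_trans ij kl; rewrite ltnn.
- by rewrite ltnn in ij.
Qed.

Lemma exists_superset_card (T : finType) (S : {set T}) m :
  (#|S| <= m <= #|T|)%N -> exists2 U : {set T}, S \subset U & #|U| = m.
Proof.
elim: m => [|m IH] /andP [Sm mT].
  by exists S => //; apply/eqP; rewrite -leqn0.
have [<-|SmS] := eqVneq #|S| m.+1; first by exists S.
have [U SU Um] : exists2 U : {set T}, S \subset U & #|U| = m.
  by apply: IH; rewrite -ltnS ltn_neqAle SmS Sm ltnW.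
have /card_gt0P [x xU] : (0 < #|~: U|)%N by have := cardsC U; lia.
exists (x |: U); first exact: subset_trans SU (subsetUr _ _).
by rewrite cardsU1 -in_setC xU Um.
Qed.

Lemma cards3_set3 (T : finType) (U : {set T}) : #|U| = 3%N ->
  exists i j k, [/\ i != j, i != k, j != k & U = [set i; j; k]].
Proof.
move=> U3; have [i iU] : exists i, i \in U by apply/card_gt0P; rewrite U3.
have /eqP/cards2P [j [k [jk Ui]]] : #|U :\ i| = 2%N.
  by move: U3; rewrite (cardsD1 i U) iU; lia.
have : i \notin U :\ i by rewrite !inE eqxx.
rewrite Ui !inE negb_or => /andP [ij ik].
by exists i, j, k; split; rewrite // -setUA -Ui setD1K.
Qed.

Section Weight.
Variables (F : finFieldType) (n : nat).
Local Open Scope ring_scope.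
Local Notation q := #|F|.

Definition supp (e : 'rV[F]_n) := [set i : 'I_n | e 0 i != 0].

Definition delta_row (i : 'I_n) : 'rV[F]_n := delta_mx 0 i.

Lemma wt0 : wt (0 : 'rV[F]_n) = 0%N.
Proof. by apply/eqP; rewrite cards_eq0; apply/eqP/setP => i; rewrite !inE mxE eqxx. Qed.

Lemma wtN (x : 'rV[F]_n) : wt (- x) = wt x.
Proof. by apply: eq_card => i; rewrite !inE mxE oppr_eq0. Qed.

Lemma wtD (x y : 'rV[F]_n) : (wt (x + y) <= wt x + wt y)%N.
Proof.
apply: leq_trans (_ : #|supp x :|: supp y| <= _)%N; last by rewrite cardsU leq_subr.
apply: subset_leq_card; apply/subsetP => i; rewrite !inE !mxE.
by apply: contraR; rewrite negb_or !negbK => /andP [/eqP -> /eqP ->]; rewrite addr0.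
Qed.

Lemma wtB (x y : 'rV[F]_n) : (wt (x - y) <= wt x + wt y)%N.
Proof. by rewrite -(wtN y) wtD. Qed.

Lemma wt_sum (I : Type) (r : seq I) (P : pred I) (v : I -> 'rV[F]_n) :
  (wt (\sum_(i <- r | P i) v i) <= \sum_(i <- r | P i) wt (v i))%N.
Proof.
elim/big_rec2: _ => [|i m y _ IH]; first by rewrite wt0.
by apply: leq_trans (wtD _ _) _; rewrite leq_add2l.
Qed.

Lemma wt_delta1 (a : F) (i : 'I_n) : (wt (a *: delta_row i) <= 1)%N.
Proof.
apply: leq_trans (_ : #|[set i]| <= _)%N; last by rewrite cards1.
apply: subset_leq_card; apply/subsetP => j; rewrite !inE !mxE.
by case: (eqVneq j i) => // _; rewrite andbF mulr0 eqxx.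
Qed.

Lemma supp_delta2 (a b : F) (i j : 'I_n) : a != 0 -> b != 0 -> i != j ->
  supp (a *: delta_row i + b *: delta_row j) = [set i; j].
Proof.
move=> a0 b0 ij; apply/setP => k; rewrite !inE !mxE /=.
have [->|ki] := eqVneq k i; first by rewrite (negbTE ij) mulr1 mulr0 addr0.
by have [_|kj] := eqVneq k j; rewrite !(mulr0, mulr1, add0r, addr0) ?eqxx.
Qed.


Lemma card_supp_eq (S : {set 'I_n}) : #|[set e : 'rV[F]_n | supp e == S]| = (q.-1 ^ #|S|)%N.
Proof.
pose F0 (i : 'I_n) : pred F := if i \in S then predC1 0 else pred1 0.
pose g (f : {ffun 'I_n -> F}) : 'rV[F]_n := \row_i f i.
have g_inj : injective g.
  by move=> f1 f2 E; apply/ffunP => i; have := congr1 (fun r : 'rV[F]_n => r 0 i) E; rewrite !mxE.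
have -> : [set e : 'rV[F]_n | supp e == S] = g @: [set f | f \in family F0].
  apply/setP => e; rewrite inE; apply/eqP/imsetP.
  - move=> Se; exists [ffun i => e 0 i]; last by apply/rowP => i; rewrite !mxE ffunE.
    rewrite inE; apply/familyP => i; rewrite ffunE /F0 -Se inE.
    by case E0: (e 0 i == 0); rewrite /= !inE E0.
  - move=> [f]; rewrite inE => /familyP Hf ->; apply/setP => i.
    rewrite inE mxE; have := Hf i; rewrite /F0.
    by case: (i \in S); rewrite !inE; [move=> -> | move=> /eqP ->; rewrite eqxx].
rewrite (card_imset _ g_inj) cardsE card_family foldrE big_map big_enum /=.
rewrite -prod_nat_const [RHS]big_mkcond /=; apply: eq_big => // i _; rewrite /F0.
by case: (i \in S); rewrite ?cardC1 ?card1.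
Qed.

Lemma card_wt k : #|[set e : 'rV[F]_n | wt e == k]| = ('C(n, k) * q.-1 ^ k)%N.
Proof.
have partition_supp e :
    (#|supp e| == k : nat) = (\sum_(S : {set 'I_n} | #|S| == k) (supp e == S))%N.
  have [ek|ek] := eqVneq #|supp e| k.
    rewrite (bigD1 (supp e)) ?ek // eqxx big1 // => S /andP [_].
    by rewrite eq_sym => /negbTE ->.
  by rewrite big1 // => S /eqP Sk; case: eqP => // eS; rewrite -Sk -eS eqxx in ek.
rewrite card_set_sum (eq_bigr _ (fun e _ => partition_supp e)) exchange_big /=.
rewrite (eq_bigr (fun=> q.-1 ^ k)%N) => [|S /eqP Sk]; last by rewrite -card_set_sum card_supp_eq Sk.
rewrite (eq_bigl [in [set S : {set 'I_n} | #|S| == k]]) => [|S]; last by rewrite inE.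
by rewrite sum_nat_const card_draws card_ord.
Qed.

End Weight.


Section OvalFrame.
Variables (F : finFieldType) (O : {set point F 2}).
Hypothesis ovalO : is_oval O.
Local Open Scope ring_scope.
Local Notation q := #|F|.

Lemma oval_indep3 (P1 P2 P3 : point F 2) a b c : P1 \in O -> P2 \in O -> P3 \in O ->
  P1 != P2 -> P1 != P3 -> P2 != P3 ->
  a *: pvec P1 + (b *: pvec P2 + c *: pvec P3) = 0 -> [/\ a = 0, b = 0 & c = 0].
Proof.
move=> P1O P2O P3O P12 P13 P23 E.
have c0 : c = 0.
  apply/eqP/negPn/negP => c0.
  have : (pvec P3 <= line_mx P1 P2)%MS.
    have -> : pvec P3 = - c^-1 *: (a *: pvec P1 + b *: pvec P2).
      apply: (scalerI c0); rewrite scalerA mulrN mulfV // scaleN1r.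
      by apply/eqP; rewrite -addr_eq0 -E addrC -addrA.
    by rewrite scalemx_sub // addmx_sub // scalemx_sub ?line_mx_subl ?line_mx_subr.
  by move=> H; have := oval_notin_line_mx ovalO P1O P2O P3O P12 P13 P23; rewrite H.
move: E; rewrite c0 scale0r addr0 => E.
have b0 : b = 0.
  apply/eqP/negPn/negP => b0.
  have : P2 = P1.
    apply: (@scale_pvec_inj _ _ _ _ (- b^-1 * a)).
    apply: (scalerI b0); rewrite scalerA mulrA mulrN mulfV // mulN1r scaleNr.
    by apply/eqP; rewrite -addr_eq0 addrC E.
  by move=> E2; rewrite E2 eqxx in P12.
move: E; rewrite b0 scale0r addr0 => /eqP; rewrite scaler_eq0 (negbTE (pvec_neq0 _)) orbF.
by move/eqP.
Qed.

Lemma mxrank_oval3 m (W : 'M[F]_(m, 3)) (P1 P2 P3 : point F 2) : P1 \in O -> P2 \in O -> P3 \in O ->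
  P1 != P2 -> P1 != P3 -> P2 != P3 ->
  (pvec P1 <= W)%MS -> (pvec P2 <= W)%MS -> (pvec P3 <= W)%MS -> \rank W = 3%N.
Proof.
move=> P1O P2O P3O P12 P13 P23 s1 s2 s3.
have r3 : \rank (line_mx P1 P2 + pvec P3)%MS = 3%N.
  by rewrite mxrank_adds_rV ?mxrank_line_mx ?(oval_notin_line_mx ovalO).
apply/eqP; rewrite eqn_leq rank_leq_col -{1}r3 mxrankS //.
by rewrite addsmx_sub col_mx_sub s1 s2 s3.
Qed.

Lemma oval_three_points : exists P1 P2 P3, [/\ P1 \in O, P2 \in O & P3 \in O] /\
  [/\ P1 != P2, P1 != P3 & P2 != P3].
Proof.
have cO := card_oval ovalO; have q1 := q_gt1 F.
have [P1 P1O] : exists P1, P1 \in O by apply/card_gt0P; lia.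
have [P2 P2O] : exists P2, P2 \in O :\ P1.
  by apply/card_gt0P; move: cO; rewrite (cardsD1 P1 O) P1O; lia.
have [P3 P3O] : exists P3, P3 \in (O :\ P1) :\ P2.
  apply/card_gt0P; move: cO; rewrite (cardsD1 P1 O) P1O (cardsD1 P2 (O :\ P1)) P2O; lia.
move: P2O P3O; rewrite !inE => /andP [P21 P2O] /andP [P32 /andP [P31 P3O]].
by exists P1, P2, P3; split; split => //; rewrite eq_sym.
Qed.

Lemma oval_saturating : odd q -> saturating_1mu O q.+1 (q.-1)./2.
Proof.
move=> odd_q; split.
- exact: card_oval ovalO.
- have [P1 [P2 [P3 [[P1O P2O P3O] [P12 P13 P23]]]]] := oval_three_points.
  have sub P : P \in O -> (pvec P <= \sum_(P0 in O) <<val P0>>)%MS.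
    by move=> PO; apply: (sumsmx_sup P) => //; rewrite genmxE.
  exact: mxrank_oval3 P1O P2O P3O P12 P13 P23 (sub _ P1O) (sub _ P2O) (sub _ P3O).
- apply/negP => /eqP OT; have := card_plane F; rewrite -OT (card_oval ovalO).
  by have := q_gt1 F; nia.
- by move=> Q QO; apply: secant_mult_ge.
Qed.

End OvalFrame.

Section ParityCheck.
Variable F : finFieldType.
Variable O : {set point F 2}.
Hypothesis ovalO : is_oval O.
Hypothesis odd_q : odd #|F|.
Local Notation q := #|F|.
Local Open Scope ring_scope.
Variable n : nat.
Hypothesis hn : n = q.+1.
Variable C : 'M[F]_n.
Variable H : 'M[F]_(3, n).
Variable Pf : 'I_n -> point F 2.
Variable cf : 'I_n -> F.
Hypothesis Pf_inj : injective Pf.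
Hypothesis OE : O = [set Pf i | i : 'I_n].
Hypothesis cf0 : forall i, cf i != 0.
Hypothesis colE : forall i, col i H = cf i *: (pvec (Pf i))^T.
Hypothesis CE : (C == kermx H^T)%MS.
Local Notation delta i := (@delta_row F n i).

Lemma row_parityT i : row i H^T = cf i *: pvec (Pf i).
Proof. by rewrite -tr_col colE linearZ /= trmxK. Qed.

Definition syndrome (x : 'rV[F]_n) : 'rV[F]_3 := x *m H^T.

Lemma syndromeE x : syndrome x = \sum_i (x 0 i * cf i) *: pvec (Pf i).
Proof.
by rewrite /syndrome mulmx_sum_row; apply: eq_bigr => i _; rewrite row_parityT scalerA.
Qed.

Lemma syndromeD x y : syndrome (x + y) = syndrome x + syndrome y.
Proof. exact: mulmxDl. Qed.
Lemma syndromeB x y : syndrome (x - y) = syndrome x - syndrome y.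
Proof. exact: mulmxBl. Qed.
Lemma syndromeZ a x : syndrome (a *: x) = a *: syndrome x.
Proof. by rewrite /syndrome scalemxAl. Qed.
Lemma syndrome_delta i : syndrome (delta i) = cf i *: pvec (Pf i).
Proof. by rewrite /syndrome /delta_row -rowE row_parityT. Qed.

Lemma mem_code c : (c \in codewords C) = (syndrome c == 0).
Proof. by have /eqmxP E := CE; rewrite inE E sub_kermx. Qed.

Lemma Pf_in_oval i : Pf i \in O.
Proof. by rewrite OE; apply: imset_f. Qed.

Lemma oval_Pf P : P \in O -> exists i, P = Pf i.
Proof. by rewrite OE => /imsetP [i _ ->]; exists i. Qed.

Lemma n_ge4 : (4 <= n)%N.
Proof. by have := q_ge3 odd_q; rewrite hn. Qed.

Lemma Pf_sub_parityT i : (pvec (Pf i) <= H^T)%MS.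
Proof. by rewrite -[pvec _](scalerK (cf0 i)) -row_parityT scalemx_sub ?row_sub. Qed.

Lemma mxrank_parity : \rank H^T = 3%N.
Proof.
have [P1 [P2 [P3 [[P1O P2O P3O] [P12 P13 P23]]]]] := oval_three_points ovalO.
have sub P : P \in O -> (pvec P <= H^T)%MS by case/oval_Pf => i ->; apply: Pf_sub_parityT.
by apply: (mxrank_oval3 ovalO P1O P2O P3O P12 P13 P23); apply: sub.
Qed.

Lemma code_dimE : code_dim C = (n - 3)%N.
Proof. by rewrite /code_dim (eqmx_rank CE) mxrank_ker mxrank_parity. Qed.

Lemma syndrome0_wt_le3 e : syndrome e = 0 -> (wt e <= 3)%N -> e = 0.
Proof.
move=> se we.
have [U SU U3] : exists2 U : {set 'I_n}, supp e \subset U & #|U| = 3%N.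
  by apply: exists_superset_card; rewrite we card_ord /= (leq_trans _ n_ge4).
have [i [j [k [ij ik jk Uijk]]]] := cards3_set3 U3; rewrite {U U3}Uijk in SU.
have out l : l \notin [set i; j; k] -> e 0 l = 0.
  by move=> lU; apply/eqP; apply: contraNT lU => el; apply: (subsetP SU); rewrite inE.
move: se; rewrite syndromeE (bigD1 i) // (bigD1 j) 1?eq_sym //= (bigD1 k) /=; last first.
  by rewrite !(eq_sym k) ik jk.
rewrite big1 => [|l /andP [/andP [li lj] lk]]; last first.
  by rewrite out ?mul0r ?scale0r // !inE (negbTE li) (negbTE lj) (negbTE lk).
rewrite addr0 => E.
have [ai aj ak] : [/\ e 0 i * cf i = 0, e 0 j * cf j = 0 & e 0 k * cf k = 0].
  apply: (oval_indep3 ovalO (Pf_in_oval i) (Pf_in_oval j) (Pf_in_oval k));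
  by rewrite ?(inj_eq Pf_inj).
apply/rowP => l; rewrite mxE; have [lU|/out //] := boolP (l \in [set i; j; k]).
apply: (mulIf (cf0 l)); rewrite mul0r.
by move: lU; rewrite !inE -orbA => /or3P [] /eqP ->.
Qed.

Lemma exists_syndrome0_wt4 :
  exists2 e : 'rV[F]_n, syndrome e = 0 & (e != 0) && (wt e <= 4)%N.
Proof.
pose w := widen_ord n_ge4; have w_inj : injective w by move=> k l /(congr1 val) /= /val_inj.
have [u u0 uM] := exists_rV_mul0 (\matrix_(k < 4) row (w k) H^T) (ltnSn 3).
exists (\sum_(k < 4) u 0 k *: delta (w k)).
  rewrite -uM mulmx_sum_row /syndrome mulmx_suml; apply: eq_bigr => k _.
  by rewrite -scalemxAl /delta_row -rowE rowK.
apply/andP; split; last first.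
  apply: leq_trans (wt_sum _ _ _) _.
  have wt1 k (_ : true) := wt_delta1 (u 0 k) (w k).
  by rewrite (leq_trans (leq_sum _ wt1)) // sum1_card card_ord.
have [k uk] : exists k, u 0 k != 0.
  apply/existsP; apply: contraR u0 => /existsPn u0.
  by apply/eqP/rowP => k; rewrite mxE; apply/eqP/negPn/u0.
apply: contraNneq uk => /(congr1 (fun e : 'rV_n => e 0 (w k))); rewrite mxE summxE.
rewrite (bigD1 k) //= big1 => [|l lk]; last first.
  by rewrite !mxE (inj_eq w_inj) eq_sym (negbTE lk) mulr0.
by rewrite ?mxE ?eqxx /= ?mulr1 addr0 => ->.
Qed.

Lemma min_distE : min_dist C = 4%N.
Proof.
apply/eqP; rewrite eqn_leq; apply/andP; split.
  have [e se /andP [e0 we]] := exists_syndrome0_wt4.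
  apply: leq_trans we; apply: (@bigmin_leq _ (fun c => (c \in codewords C) && (c != 0))).
  by rewrite mem_code se eqxx e0.
apply: leq_bigmin; first exact: n_ge4.
move=> c /andP [cC c0]; rewrite leqNgt ltnS; apply: contra c0 => w3.
by apply/eqP/(syndrome0_wt_le3 _ w3)/eqP; rewrite -mem_code.
Qed.

Lemma distC_le x c : c \in codewords C -> (distC C x <= hdist x c)%N.
Proof. exact: (@bigmin_leq _ (fun c => c \in codewords C)). Qed.

Lemma distC_le_wt x e : syndrome e = syndrome x -> (distC C x <= wt e)%N.
Proof.
move=> se; have : x - e \in codewords C by rewrite mem_code syndromeB se subrr.
by move/(distC_le x); rewrite /hdist opprB addrC subrK.
Qed.

Lemma distC_syndrome0 x : syndrome x = 0 -> distC C x = 0%N.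
Proof.
move=> sx; apply/eqP; rewrite -leqn0.
apply: leq_trans (distC_le_wt (_ : syndrome 0 = syndrome x)) _; last by rewrite wt0.
by rewrite sx /syndrome mul0mx.
Qed.

Lemma distC_le1 x i a : syndrome x = a *: pvec (Pf i) -> (distC C x <= 1)%N.
Proof.
move=> sx; apply: leq_trans (distC_le_wt (e := (a / cf i) *: delta i) _) (wt_delta1 _ _).
by rewrite syndromeZ syndrome_delta scalerA divfK ?cf0 // sx.
Qed.

Definition secant_error (a : F) (Q : point F 2) (p : 'I_n * 'I_n) : 'rV[F]_n :=
  (a * line_coordl Q (Pf p.1) (Pf p.2) / cf p.1) *: delta p.1 +
  (a * line_coordr Q (Pf p.1) (Pf p.2) / cf p.2) *: delta p.2.

Lemma syndrome_secant_error a Q p : (pvec Q <= line_mx (Pf p.1) (Pf p.2))%MS ->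
  syndrome (secant_error a Q p) = a *: pvec Q.
Proof.
move=> s; rewrite syndromeD !syndromeZ !syndrome_delta !scalerA !divfK ?cf0 //.
by rewrite [in RHS](line_coordE s) scalerDr !scalerA.
Qed.

Definition secant_idx (Q : point F 2) :=
  [set p : 'I_n * 'I_n | (p.1 < p.2)%N && (pvec Q <= line_mx (Pf p.1) (Pf p.2))%MS].

Lemma supp_secant_error a Q p : a != 0 -> Q \notin O -> p \in secant_idx Q ->
  supp (secant_error a Q p) = [set p.1; p.2].
Proof.
rewrite inE => a0 QO /andP [lt s].
have QP i : Q != Pf i by apply: contraNneq QO => ->; exact: Pf_in_oval.
have /andP [k0 k1] := line_coord_neq0 s (QP _) (QP _).
apply: supp_delta2; rewrite ?mulf_neq0 ?invr_neq0 ?cf0 //.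
by apply/eqP => E; rewrite E ltnn in lt.
Qed.

Lemma wt_secant_error a Q p : a != 0 -> Q \notin O -> p \in secant_idx Q ->
  wt (secant_error a Q p) = 2%N.
Proof.
move=> a0 QO pP; rewrite /wt -/(supp _) (supp_secant_error a0 QO pP) cards2.
by move: pP; rewrite inE => /andP [lt _]; case: eqP => // E; rewrite E ltnn in lt.
Qed.

Lemma secant_error_inj a Q : a != 0 -> Q \notin O ->
  {in secant_idx Q &, injective (secant_error a Q)}.
Proof.
move=> a0 QO [i j] [k l] pP p'P E; have := supp_secant_error a0 QO pP.
rewrite E (supp_secant_error a0 QO p'P) => /esym; apply: set2_ltn_inj.
- by move: pP; rewrite inE => /andP [].
- by move: p'P; rewrite inE => /andP [].
Qed.

Lemma card_secant_idx Q : #|secant_idx Q| = secant_mult O Q.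
Proof.
apply/eqP; rewrite -(eqn_pmul2r (_ : 0 < 2)%N) // secant_mult_double; apply/eqP.
pose g i j := (pvec Q <= line_mx (Pf i) (Pf j))%MS.
pose pairs (r : rel 'I_n) := (\sum_i \sum_j (r i j && g i j))%N.
have -> : secant_pairs O Q = (pairs (fun i j => i < j) + pairs (fun i j => j < i))%N.
  have -> : secant_pairs O Q =
      (\sum_(P in O) \sum_(P' in O | P' != P) (pvec Q <= line_mx P P')%MS)%N.
    by apply: eq_bigr => P _; apply: eq_bigl => P'; rewrite !inE andbC.
  rewrite OE big_imset /= => [|i j _ _]; last exact: Pf_inj.
  rewrite -big_split; apply: eq_bigr => i _.
  rewrite big_imset_cond /= => [|j k _ _]; last exact: Pf_inj.
  rewrite -big_split big_mkcond; apply: eq_bigr => j _.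
  by rewrite (inj_eq Pf_inj) -val_eqE neq_ltn /g; case: ltngtP; case: (pvec Q <= _)%MS.
have -> : pairs (fun i j => j < i)%N = pairs (fun i j => i < j)%N.
  rewrite /pairs exchange_big; apply: eq_bigr => i _; apply: eq_bigr => j _.
  by rewrite /g (line_mxC (Pf j)).
by rewrite /secant_idx card_set_sum /pairs pair_bigA [in RHS]addnn -[in RHS]muln2.
Qed.

Lemma secant_idx_ge Q : Q \notin O -> ((q.-1)./2 <= #|secant_idx Q|)%N.
Proof.
by move=> QO; rewrite card_secant_idx secant_mult_ge.
Qed.

Lemma secant_codeword x a Q p : a != 0 -> Q \notin O -> syndrome x = a *: pvec Q ->
  p \in secant_idx Q ->
  (x - secant_error a Q p \in codewords C) && (hdist x (x - secant_error a Q p) == 2%N).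
Proof.
move=> a0 QO sQ pP; move: (pP); rewrite inE => /andP [_ sp].
rewrite mem_code syndromeB syndrome_secant_error // sQ subrr eqxx /=.
by rewrite /hdist opprB addrC subrK wt_secant_error.
Qed.

Lemma distC_le2 x : (distC C x <= 2)%N.
Proof.
have [s0|s0] := eqVneq (syndrome x) 0; first by rewrite distC_syndrome0.
have [Q [a a0 sQ]] := row_scale_pvec s0; have [QO|QO] := boolP (Q \in O).
  have [i QE] := oval_Pf QO; apply: leq_trans (distC_le1 (i := i) (a := a) _) _ => //.
  by rewrite sQ QE.
have /card_gt0P [p pP] : (0 < #|secant_idx Q|)%N.
  by have := secant_idx_ge QO; have := q_ge3 odd_q; lia.
by have /andP [cC /eqP <-] := secant_codeword a0 QO sQ pP; apply: distC_le.
Qed.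

Lemma nb_at2_ge x : distC C x = 2%N -> ((q.-1)./2 <= nb_at C 2 x)%N.
Proof.
move=> d2; have s0 : syndrome x != 0 by apply: contra_eqN d2 => /eqP /distC_syndrome0 ->.
have [Q [a a0 sQ]] := row_scale_pvec s0.
have QO : Q \notin O.
  apply/negP => /oval_Pf [i QE].
  by have := distC_le1 (x := x) (i := i) (a := a); rewrite d2 sQ QE => /(_ erefl).
pose c p := x - secant_error a Q p.
have c_inj : {in secant_idx Q &, injective c}.
  by move=> p p' pP p'P /subrI; apply: secant_error_inj.
apply: leq_trans (secant_idx_ge QO) _; rewrite -(card_in_imset c_inj).
apply/subset_leq_card/subsetP => _ /imsetP [p pP ->].
by rewrite inE; apply: secant_codeword.
Qed.

Definition ball1 := [set e : 'rV[F]_n | (wt e <= 1)%N].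

Lemma card_ball1 : #|ball1| = (1 + n * q.-1)%N.
Proof.
rewrite card_set_sum.
have -> : (\sum_(e : 'rV[F]_n) (wt e <= 1)%N =
    \sum_(e : 'rV[F]_n) ((wt e == 0%N) + (wt e == 1%N)))%N.
  by apply: eq_bigr => e _; case: (wt e) => [|[|]].
by rewrite big_split /= -!card_set_sum !card_wt bin0 bin1 expn0 expn1 muln1.
Qed.

Lemma card_code : #|codewords C| = (q ^ (n - 3))%N.
Proof. by rewrite card_rV_submx -code_dimE. Qed.

Definition covered1 := [set x : 'rV[F]_n | (distC C x <= 1)%N].

Lemma code_eq_wt_le3 c c' : c \in codewords C -> c' \in codewords C ->
  (wt (c - c') <= 3)%N -> c = c'.
Proof.
rewrite !mem_code => /eqP sc /eqP sc' w3; apply/eqP; rewrite -subr_eq0; apply/eqP.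
by apply: syndrome0_wt_le3 w3; rewrite syndromeB sc sc' subrr.
Qed.

Lemma distC_attained x : exists2 c, c \in codewords C & distC C x = hdist x c.
Proof.
apply: (@bigmin_attained _ (fun c => c \in codewords C) _ _ 0); first by rewrite inE sub0mx.
by move=> c _; rewrite /hdist /wt -[n in (_ <= n)%N]card_ord max_card.
Qed.

(* Balls of radius 1 around codewords are disjoint since the minimum distance is 4. *)
Lemma card_covered1 : #|covered1| = (q ^ (n - 3) * q ^ 2)%N.
Proof.
have -> : (q ^ 2 = #|ball1|)%N.
  by rewrite card_ball1 hn; have := q_gt1 F; case: q => // k _; nia.
rewrite -card_code -cardsX; pose f (ce : 'rV[F]_n * 'rV[F]_n) := ce.1 + ce.2.
have f_inj : {in setX (codewords C) ball1 &, injective f}.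
  move=> [c e] [c' e']; rewrite !inE /f /= => /andP [cC e1] /andP [c'C e'1] E.
  have cc' : c = c'.
    apply: code_eq_wt_le3; rewrite ?inE // (_ : c - c' = e' - e); last first.
      by rewrite -[c](addrK e) E addrAC (addrC c') addrK.
    by apply: leq_trans (wtB _ _) _; lia.
  by subst c'; congr (_, _); apply: (addrI c).
rewrite -(card_in_imset f_inj); apply: eq_card => x; rewrite inE; apply/idP/imsetP.
  have [c cC ->] := distC_attained x => dx; exists (c, x - c); last by rewrite /f addrC subrK.
  by rewrite !inE; move: cC; rewrite inE => ->.
case=> [[c e]]; rewrite !inE /f /= => /andP [cC e1] ->.
apply: leq_trans (distC_le _ (_ : c \in codewords C)) _; first by rewrite inE.
by rewrite /hdist addrC addKr.
Qed.

Lemma card_distC2 :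
  #|[set x : 'rV[F]_n | distC C x == 2%N]| = (q ^ (n - 3) * (q ^ 2 * q.-1))%N.
Proof.
have -> : [set x : 'rV[F]_n | distC C x == 2%N] = ~: covered1.
  apply/setP => x; rewrite !inE -ltnNge.
  by have := distC_le2 x; case: (distC C x) => [|[|[|]]].
apply/eqP; rewrite -(eqn_add2l #|covered1|) cardsC card_mx mul1n card_covered1 -mulnDr.
rewrite -{1}(subnK (leq_trans _ n_ge4 : 3 <= n)%N) // expnD.
rewrite eqn_pmul2l ?expn_gt0 ?(ltnW (q_gt1 F)) //.
by have := q_gt1 F; case: q => // k _; rewrite !expnS expn0 /=; apply/eqP; nia.
Qed.

Lemma exists_distC2 : exists x, distC C x = 2%N.
Proof.
have : (0 < #|[set x : 'rV[F]_n | distC C x == 2%N]|)%N.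
  rewrite card_distC2; have := q_gt1 F; case: q => // k k1.
  by rewrite !muln_gt0 !expn_gt0 /=; lia.
by case/card_gt0P => x; rewrite inE => /eqP; exists x.
Qed.

Lemma covradE : covrad C = 2%N.
Proof.
apply/eqP; rewrite eqn_leq; apply/andP; split.
  by apply/bigmax_leqP => x _; apply: distC_le2.
by have [x dx] := exists_distC2; rewrite -dx; apply: leq_bigmax.
Qed.

Lemma distC_eq2 x c : c \in codewords C -> hdist x c = 2%N -> distC C x = 2%N.
Proof.
move=> cC hc; apply/eqP; rewrite eqn_leq distC_le2 /= leqNgt ltnS.
have [c' c'C ->] := distC_attained x; apply/negP => hc'.
have cc' : c = c'.
  apply: code_eq_wt_le3 => //; rewrite (_ : c - c' = (x - c') - (x - c)); last first.
    by rewrite opprB [RHS]addrC addrA subrK.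
  by apply: leq_trans (wtB _ _) _; move: hc hc'; rewrite /hdist => -> ; rewrite addn2.
by move: hc'; rewrite -cc' hc.
Qed.

Lemma sum_nb_at2 : (\sum_(x | distC C x == 2%N) nb_at C 2 x =
  #|codewords C| * ('C(n, 2) * q.-1 ^ 2))%N.
Proof.
rewrite big_mkcond /=.
have -> : (\sum_x (if distC C x == 2%N then nb_at C 2 x else 0) =
    \sum_x \sum_c ((c \in codewords C) && (hdist x c == 2%N)))%N.
  apply: eq_bigr => x _; rewrite /nb_at card_set_sum.
  case: eqP => // dx; rewrite big1 // => c _.
  case cK: (c \in codewords C) => //=; case: eqP => // hc.
  by have := distC_eq2 cK hc.
rewrite exchange_big /= [RHS]mulnC /codewords card_set_sum big_distrr /=.
apply: eq_bigr => c _; rewrite inE; case cK: (c <= C)%MS; last by rewrite muln0 big1.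
rewrite muln1 -card_wt card_set_sum /=.
rewrite (reindex_inj (addIr c)) /=; apply: eq_bigr => e _.
by rewrite /hdist addrK.
Qed.

Lemma densityE : density C 2 (q.-1)./2 = (1 + 1 / q%:R)%R.
Proof.
rewrite /density sum_nb_at2 card_code card_distC2.
have eB : ('C(n, 2)%:R : rat) = q.+1%:R * q%:R / 2.
  by apply: (canRL (mulfK _)); rewrite // -!natrM bin2_muln2 hn.
have emu : (((q.-1)./2)%:R : rat) = q.-1%:R / 2.
  by apply: (canRL (mulfK _)); rewrite // -natrM; congr _%:R; move: odd_q; lia.
have : (0 < q ^ (n - 3))%N by rewrite expn_gt0 (ltnW (q_gt1 F)).
move: (q ^ (n - 3))%N => Z Z0; rewrite !natrM eB emu.
have := q_gt1 F; case: q => // p p0; rewrite -[p.+1.-1]/p.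
have p0' : (p%:R : rat) != 0 by rewrite pnatr_eq0 -lt0n.
have Z0' : (Z%:R : rat) != 0 by rewrite pnatr_eq0 -lt0n.
by field; rewrite p0' Z0' addrC natr1 pnatr_eq0.
Qed.

Lemma oval_code_params :
  [/\ code_dim C = (n - 3)%N, min_dist C = 4%N, covrad C = 2%N,
      MCF C 2 (q.-1)./2 & density C 2 (q.-1)./2 = (1 + 1 / q%:R)%R].
Proof.
split; rewrite ?code_dimE ?min_distE ?covradE ?densityE //.
by split; [exact: covradE | exact: nb_at2_ge].
Qed.

End ParityCheck.

Theorem proposition5p7 (F : finFieldType) (O : {set point F 2}) :
  odd #|F| -> is_oval O ->
  let q := #|F| in let n := q.+1 in let mu := (q.-1)./2 in
  saturating_1mu O n mu /\
  forall C : 'M[F]_n, corresponds C O ->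
    [/\ code_dim C = (n - 3)%N, min_dist C = 4%N, covrad C = 2%N,
        MCF C 2 mu & density C 2 mu = (1 + 1 / q%:R)%R].
Proof.
move=> odd_q ovalO q n mu; split; first exact: oval_saturating.
move=> C [H [Pf [Pf_inj OE colH CE]]]; have [cf cf0 colE] := fin_all_exists2 colH.
exact: (oval_code_params ovalO odd_q (erefl n) Pf_inj OE cf0 colE CE).
Qed.
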